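(* There is no graph $H$ on five vertices such that every $H$-free graph $G$ is $(\chi(G)+1)$-mixing.
   Context: All graphs are finite and simple. $\chi(G)$ is the chromatic number. The reconfiguration graph $\mathcal{R}_k(G)$ has the proper $k$-colourings of $G$ (colours $\{1,\dots,k\}$) as vertices, two being adjacent if they differ on exactly one vertex; $G$ is $k$-mixing if $\mathcal{R}_k(G)$ is connected. $G$ is $H$-free if it has no induced subgraph isomorphic to $H$. *)

From mathcomp Require Import all_boot.
Set Implicit Arguments. Unset Strict Implicit. Unset Printing Implicit Defensive.

Definition simple_graph (T : finType) (e : rel T) : Prop :=
  symmetric e /\ irreflexive e.

Definition has_induced (U T : finType) (h : rel U) (e : rel T) : Prop :=
  exists f : U -> T, injective f /\ forall x y, h x y = e (f x) (f y).

Definition H_free (U T : finType) (h : rel U) (e : rel T) : Prop :=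
  ~ has_induced h e.

(* Proper k-colourings, colours 'I_k (= {0,..,k-1}, a relabelling of {1..k}). *)
Definition proper (T : finType) (e : rel T) {k : nat} (c : {ffun T -> 'I_k}) : bool :=
  [forall x, forall y, e x y ==> (c x != c y)].

Definition colorable (T : finType) (e : rel T) (k : nat) : bool :=
  [exists c : {ffun T -> 'I_k}, proper e c].

(* Chromatic number: least k with a proper k-colouring (k = #|T| always works). *)
Definition chi (T : finType) (e : rel T) : nat :=
  find (colorable e) (iota 0 #|T|.+1).

Definition recon_rel (T : finType) (e : rel T) (k : nat) : rel {ffun T -> 'I_k} :=
  fun c d => [&& proper e c, proper e d & #|[pred v | c v != d v]| == 1].

Definition mixing (T : finType) (e : rel T) (k : nat) : Prop :=
  forall c d : {ffun T -> 'I_k}, proper e c -> proper e d ->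
    connect (recon_rel e (k:=k)) c d.

(* If H contains an induced 2K2, take for G the complement of the line graph
   of the subdivided diamond: it is 2K2-free, hence H-free, it has a 4-clique
   and a 4-colouring, and colouring each incidence by its edge of the diamond
   is a frozen 5-colouring, so R_5(G) has an isolated vertex.  Otherwise H is
   2K2-free; deleting any vertex of C6 leaves a P5, which contains a 2K2, so
   C6 is H-free, while chi(C6) = 2 and i |-> i mod 3 is a frozen 3-colouring. *)

From Pilot Require Import Defs.
From mathcomp Require Import all_boot zmodp.
Import Defs. (* so that [proper] is Defs.proper, not fintype's [proper] *)
Set Implicit Arguments.
Unset Strict Implicit.
Unset Printing Implicit Defensive.

Definition induced_2K2 (T : Type) (r : T -> T -> bool) (a b c d : T) : bool :=
  [&& r a b, r c d, ~~ r a c, ~~ r a d, ~~ r b c & ~~ r b d].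

Definition frozen (T : finType) (e : rel T) k (c : {ffun T -> 'I_k}) : Prop :=
  forall v (col : 'I_k), col != c v -> exists2 u, e v u & c u = col.

Section Colourings.

Variables (T : finType) (e : rel T).

Lemma frozen_recon_isolated k (c d : {ffun T -> 'I_k}) :
  frozen e c -> ~~ recon_rel e c d.
Proof.
move=> frc; apply/negP => /and3P[_ /forallP pd /card1P[v diffv]].
have dcv : d v != c v by have := diffv v; rewrite !inE eqxx eq_sym.
have [u evu cud] := frc v (d v) dcv.
have duv : d u = d v.
  have [-> // | uv] := eqVneq u v.
  by have := diffv u; rewrite !inE (negbTE uv) cud => /negbFE/eqP.
by have /forallP/(_ u) := pd v; rewrite evu duv eqxx.
Qed.

Lemma frozen_not_mixing k (c d : {ffun T -> 'I_k}) :
  frozen e c -> proper e c -> proper e d -> c != d -> ~ mixing e k.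
Proof.
move=> frc pc pd cd /(_ c d pc pd)/connectP[[|x p] /= steps dE].
  by rewrite dE eqxx in cd.
by case/andP: steps; rewrite (negbTE (frozen_recon_isolated x frc)).
Qed.

Lemma clique_not_colorable (A : {pred T}) k :
  {in A &, forall x y, x != y -> e x y} -> k < #|A| -> ~~ colorable e k.
Proof.
move=> cliqueA ltkA; apply/existsP => -[c /forallP pc].
have c_inj : {in A &, injective c}.
  move=> x y xA yA cxy; apply/eqP; apply: contraLR isT => xy.
  by have /forallP/(_ y) := pc x; rewrite cliqueA // cxy eqxx.
by have := @leq_card_in _ _ c A c_inj; rewrite card_ord leqNgt ltkA.
Qed.

Lemma colorable_card : irreflexive e -> colorable e #|T|.
Proof.
move=> irr; apply/existsP; exists [ffun x => enum_rank x].
apply/forallP => x; apply/forallP => y; rewrite !ffunE (inj_eq enum_rank_inj).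
by apply/implyP; apply: contraTneq => ->; rewrite irr.
Qed.

Lemma chi_eq n :
  irreflexive e -> colorable e n -> (forall k, k < n -> ~~ colorable e k) ->
  chi e = n.
Proof.
move=> irr col_n below_n.
have le_nT : n <= #|T|.
  by rewrite leqNgt; apply: contraL (colorable_card irr) => /below_n.
rewrite /chi -(subnKC (leqW le_nT)) iotaD find_cat size_iota.
have -> : has (colorable e) (iota 0 n) = false.
  by apply/hasPn => k; rewrite mem_iota => /below_n.
by rewrite subSn //= col_n addn0.
Qed.

End Colourings.

Section InducedSubgraphs.

Variables (U T : finType) (h : rel U) (e : rel T).

Lemma induced_2K2_pull (f : U -> T) a b c d :
  (forall x y, h x y = e (f x) (f y)) ->
  induced_2K2 e (f a) (f b) (f c) (f d) = induced_2K2 h a b c d.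
Proof. by move=> hf; rewrite /induced_2K2 !hf. Qed.

Lemma H_free_of_2K2 a b c d :
  induced_2K2 h a b c d -> (forall w x y z, ~~ induced_2K2 e w x y z) ->
  H_free h e.
Proof.
move=> hK2 eK2free [f [_ hf]].
by have := eK2free (f a) (f b) (f c) (f d); rewrite induced_2K2_pull // hK2.
Qed.

Lemma inj_codom_all_but_one (f : U -> T) :
  injective f -> #|T| = #|U|.+1 -> exists m, forall v, v != m -> v \in codom f.
Proof.
move=> f_inj cardT.
have /card1P[m codomC] : #|[predC codom f]| == 1.
  have := cardC [in codom f].
  by rewrite card_codom // cardT -addn1 => /addnI ->.
by exists m => v; apply: contraR => vC; have := codomC v; rewrite !inE vC.
Qed.

Lemma H_free_of_deleted_2K2 :
  #|T| = #|U|.+1 ->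
  (forall m, exists a b c d,
     induced_2K2 e a b c d /\ m \notin [:: a; b; c; d]) ->
  (forall w x y z, ~~ induced_2K2 h w x y z) -> H_free h e.
Proof.
move=> cardT deleted hK2free [f [f_inj hf]].
have [m im_f] := inj_codom_all_but_one f_inj cardT.
have [a [b [c [d [eK2]]]]] := deleted m.
rewrite !inE !negb_or ![m == _]eq_sym => /and4P[/im_f/codomP[a' aE]
  /im_f/codomP[b' bE] /im_f/codomP[c' cE] /im_f/codomP[d' dE]].
move: eK2; rewrite aE bE cE dE induced_2K2_pull //.
by rewrite (negbTE (hK2free _ _ _ _)).
Qed.

End InducedSubgraphs.

Lemma all_iota_ord n (p : pred nat) : all p (iota 0 n) -> forall i : 'I_n, p i.
Proof.
by move/allP=> all_p i; apply: all_p; rewrite mem_iota add0n ltn_ord.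
Qed.

(* [forall] over 'I_n does not reduce under vm_compute (the enumeration of
   'I_n goes through the opaque proof idP), so concrete graphs are given by
   relations on nat and their properties are checked on iota 0 n. *)
Section OrdinalGraphs.

Variables (n : nat) (r : nat -> nat -> bool).

Definition ord_graph : rel 'I_n := fun i j => r i j.

Definition ord_colouring k (f : nat -> nat) : {ffun 'I_n -> 'I_k.+1} :=
  [ffun i : 'I_n => inZp (f i)].

Arguments ord_colouring : clear implicits.

Lemma ord_graph_simple :
  all (fun i => ~~ r i i && all (fun j => r i j == r j i) (iota 0 n))
    (iota 0 n) ->
  simple_graph ord_graph.
Proof.
move=> /all_iota_ord chk; split=> [i j | i].
  by have /andP[_ /all_iota_ord/(_ j)/eqP] := chk i.
by have /andP[/negbTE] := chk i.
Qed.

Lemma ord_colouring_proper k f :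
  all (fun i => all (fun j => r i j ==> (f i != f j %[mod k.+1]))
    (iota 0 n)) (iota 0 n) ->
  proper ord_graph (ord_colouring k f).
Proof.
move=> /all_iota_ord chk; apply/forallP => i; apply/forallP => j.
by rewrite !ffunE; apply: (all_iota_ord (chk i)).
Qed.

Lemma ord_colouring_frozen k f :
  all (fun i => all (fun col => (col != f i %% k.+1) ==>
    has (fun j => r i j && (f j %% k.+1 == col)) (iota 0 n)) (iota 0 k.+1))
    (iota 0 n) ->
  frozen ord_graph (ord_colouring k f).
Proof.
move=> /all_iota_ord chk i col; rewrite ffunE => col_i.
have /implyP/(_ col_i)/hasP[j] := all_iota_ord (chk i) col.
rewrite mem_iota => /andP[_ lt_jn] /andP[rij /eqP fj].
by exists (Ordinal lt_jn); last by apply: val_inj; rewrite ffunE.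
Qed.

Lemma ord_colouring_neq k f g i :
  i < n -> f i != g i %[mod k.+1] -> ord_colouring k f != ord_colouring k g.
Proof.
move=> lt_in; apply: contra => /eqP cE.
have := congr1 (fun c : {ffun 'I_n -> 'I_k.+1} => val (c (Ordinal lt_in))) cE.
by rewrite !ffunE /= => ->.
Qed.

Lemma ord_graph_2K2_free :
  all (fun a => all (fun b => all (fun c => all (fun d =>
    ~~ induced_2K2 r a b c d) (iota 0 n)) (iota 0 n)) (iota 0 n)) (iota 0 n) ->
  forall a b c d : 'I_n, ~~ induced_2K2 ord_graph a b c d.
Proof.
move=> /all_iota_ord chk a b c d.
exact: all_iota_ord (all_iota_ord (all_iota_ord (chk a) b) c) d.
Qed.

Lemma ord_clique_not_colorable (s : seq nat) k :
  uniq s -> all (fun i => i < n) s ->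
  all (fun i => all (fun j => (i != j) ==> r i j) s) s -> k < size s ->
  ~~ colorable ord_graph k.
Proof.
move=> uniq_s /allP s_lt /allP cliq lt_ks.
pose A := pmap insub s : seq 'I_n.
apply: (@clique_not_colorable _ _ [in A]).
  move=> x y; rewrite !mem_pmap_sub => xs ys xy.
  by have /allP/(_ _ ys)/implyP := cliq _ xs; apply.
rewrite (card_uniqP _) ?pmap_sub_uniq // size_pmap_sub.
by rewrite (eq_in_count s_lt) count_predT.
Qed.

End OrdinalGraphs.

Definition cycle6_adj (i j : nat) : bool :=
  (j == i.+1 %% 6) || (i == j.+1 %% 6).

Definition cycle6 : rel 'I_6 := ord_graph cycle6_adj.

Lemma cycle6_simple : simple_graph cycle6.
Proof. by apply: ord_graph_simple; vm_compute. Qed.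

Lemma cycle6_chi : chi cycle6 = 2.
Proof.
have [_ irr] := cycle6_simple.
apply: chi_eq => //.
  apply/existsP; exists (ord_colouring 6 1 id).
  by apply: ord_colouring_proper; vm_compute.
by move=> k lt_k2; apply: (@ord_clique_not_colorable _ _ [:: 0; 1]); vm_compute.
Qed.

Lemma cycle6_not_mixing3 : ~ mixing cycle6 3.
Proof.
apply: (@frozen_not_mixing _ _ _ (ord_colouring 6 2 id)
                                  (ord_colouring 6 2 succn)).
- by apply: ord_colouring_frozen; vm_compute.
- by apply: ord_colouring_proper; vm_compute.
- by apply: ord_colouring_proper; vm_compute.
- exact: (@ord_colouring_neq _ _ _ _ 0).
Qed.

Lemma cycle6_deleted_2K2 (m : 'I_6) :
  exists a b c d, induced_2K2 cycle6 a b c d /\ m \notin [:: a; b; c; d].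
Proof.
(* Deleting m from C6 leaves the path m+1, ..., m+5. *)
pose P m := let: (a, b, c, d) :=
    ((m + 1) %% 6, (m + 2) %% 6, (m + 4) %% 6, (m + 5) %% 6) in
  induced_2K2 cycle6_adj a b c d && (m \notin [:: a; b; c; d]).
have /andP[K2 notin] : P m by apply: all_iota_ord; vm_compute.
by exists (inZp (m + 1)), (inZp (m + 2)), (inZp (m + 4)), (inZp (m + 5)).
Qed.

(* The diamond has edges 01, 02, 12, 13, 23; vertex i is the incidence of
   edge i./2 with its endpoint diamond_end i, and two incidences are adjacent
   when they share neither the edge nor the endpoint.  So diamond_graph is the
   complement of the line graph of the subdivided diamond. *)
Definition diamond_end (i : nat) : nat :=
  nth 0 [:: 0; 1; 0; 2; 1; 2; 1; 3; 2; 3] i.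

Definition diamond_adj (i j : nat) : bool :=
  (i./2 != j./2) && (diamond_end i != diamond_end j).

Definition diamond_graph : rel 'I_10 := ord_graph diamond_adj.

Lemma diamond_graph_simple : simple_graph diamond_graph.
Proof. by apply: ord_graph_simple; vm_compute. Qed.

Lemma diamond_graph_chi : chi diamond_graph = 4.
Proof.
have [_ irr] := diamond_graph_simple.
apply: chi_eq => //.
  apply/existsP; exists (ord_colouring 10 3 diamond_end).
  by apply: ord_colouring_proper; vm_compute.
move=> k lt_k4.
by apply: (@ord_clique_not_colorable _ _ [:: 0; 4; 8; 7]); vm_compute.
Qed.

Lemma diamond_graph_not_mixing5 : ~ mixing diamond_graph 5.
Proof.
apply: (@frozen_not_mixing _ _ _ (ord_colouring 10 4 half)
                                  (ord_colouring 10 4 diamond_end)).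
- by apply: ord_colouring_frozen; vm_compute.
- by apply: ord_colouring_proper; vm_compute.
- by apply: ord_colouring_proper; vm_compute.
- exact: (@ord_colouring_neq _ _ _ _ 1).
Qed.

Lemma diamond_graph_2K2_free a b c d : ~~ induced_2K2 diamond_graph a b c d.
Proof. by apply: ord_graph_2K2_free; vm_compute. Qed.

Theorem lemma5 :
  forall h : rel 'I_5, simple_graph h ->
    exists (T : finType) (e : rel T),
      simple_graph e /\ H_free h e /\ ~ mixing e (chi e).+1.
Proof.
move=> h _.
have [/existsP[a /existsP[b /existsP[c /existsP[d hK2]]]] | no_hK2] :=
  boolP [exists a, exists b, exists c, exists d, induced_2K2 h a b c d].
  exists _, diamond_graph; split; first exact: diamond_graph_simple.
  split; first exact: H_free_of_2K2 hK2 diamond_graph_2K2_free.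
  by rewrite diamond_graph_chi; exact: diamond_graph_not_mixing5.
exists _, cycle6; split; first exact: cycle6_simple.
split; last by rewrite cycle6_chi; exact: cycle6_not_mixing3.
apply: H_free_of_deleted_2K2; first by rewrite !card_ord.
  exact: cycle6_deleted_2K2.
move=> w x y z; apply: contra no_hK2 => wxyz.
by apply/existsP; exists w; apply/existsP; exists x; apply/existsP; exists y;
  apply/existsP; exists z.
Qed.
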